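(* Let $d\ge2$, let $\Omega\subset\mathbb R^d$ be a nonempty bounded open convex polytope, and suppose $\mathfrak E=\{e_1,\dots,e_p\}\subset\mathbb R^d$ is weakly incoming to $\Omega$. Then there exist $r>0$ and $\epsilon\in]0,1]$ such that for every $x_0\in\overline\Omega$ there exist $q\in\{1,\dots,p\}$ and $\theta_q\in\{\pm1\}$ with $$x+t\theta_qe_q\in\Omega\qquad\text{for all }x\in B(x_0,r)\cap\Omega\text{ and all }t\in[0,\epsilon].$$
   Context: $\Omega=\{x\in\mathbb R^d:\ \ell_j(x)>b_j,\ j=1,\dots,m\}$ for linear forms $\ell_j$ and reals $b_j$. Define $\mathrm c:\mathbb R^d\to\mathbb N\cup\{+\infty\}$ by $\mathrm c(x)=0$ if $x\in\Omega$, $+\infty$ if $x\notin\overline\Omega$, $\#\{i:\ell_i(x)=b_i\}$ if $x\in\partial\Omega$. $\mathfrak E$ is weakly incoming to $\Omega$ if for every $x_0\in\partial\Omega$ there exist $\epsilon>0$, $\theta\in\{\pm1\}$, $e\in\mathfrak E$ with $\mathrm c(x_0+\theta te)<\mathrm c(x_0)$ for all $t\in]0,\epsilon]$. $B(x_0,r)$ is the open ball of radius $r$ about $x_0$. *)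

From HB Require Import structures.
From mathcomp Require Import all_boot all_order all_algebra.
From mathcomp Require Import all_classical all_reals all_analysis.
Set Implicit Arguments. Unset Strict Implicit. Unset Printing Implicit Defensive.
Import Order.TTheory GRing.Theory Num.Theory.
Import numFieldNormedType.Exports.
Local Open Scope classical_set_scope.
Local Open Scope ring_scope.

Definition lform (R : realType) (d : nat) (a x : 'rV[R]_d) : R :=
  \sum_(i < d) a 0 i * x 0 i.

Definition enorm (R : realType) (d : nat) (x : 'rV[R]_d) : R :=
  Num.sqrt (\sum_(i < d) x 0 i ^+ 2).

Definition eball (R : realType) (d : nat) (x0 : 'rV[R]_d) (r : R) : set 'rV[R]_d :=
  [set x | enorm (x - x0) < r].

Definition polyOmega (R : realType) (d m : nat) (a : 'I_m -> 'rV[R]_d)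
  (b : 'I_m -> R) : set 'rV[R]_d :=
  [set x | forall j, b j < lform (a j) x].

(* Boundary of Omega: closure minus Omega (Omega is open). *)
Definition polyBoundary (R : realType) (d m : nat) (a : 'I_m -> 'rV[R]_d)
  (b : 'I_m -> R) : set 'rV[R]_d :=
  closure (polyOmega a b) `\` polyOmega a b.

(* The counting function c : R^d -> N u {+oo}, valued in \bar R. *)
Definition ccount (R : realType) (d m : nat) (a : 'I_m -> 'rV[R]_d)
  (b : 'I_m -> R) (x : 'rV[R]_d) : \bar R :=
  if x \in polyOmega a b then 0%E
  else if x \notin closure (polyOmega a b) then +oo%E
  else ((#|[set i : 'I_m | lform (a i) x == b i]|)%:R)%:E.

Definition weakly_incoming (R : realType) (d m p : nat) (a : 'I_m -> 'rV[R]_d)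
  (b : 'I_m -> R) (e : 'I_p -> 'rV[R]_d) : Prop :=
  forall x0, polyBoundary a b x0 ->
    exists eps : R, 0 < eps /\
    exists theta : R, (theta = 1 \/ theta = -1) /\
    exists q : 'I_p,
      forall t : R, 0 < t -> t <= eps ->
        (ccount a b (x0 + (theta * t) *: e q) < ccount a b x0)%E.

(* At a boundary point x0, weak incomingness gives v = +-e_q with x0 + t v in the
   closure for small t > 0, so every constraint that decreases along v is inactive
   at x0 ([feasible_dir]).  By continuity of the constraints such a direction keeps
   working nearby: for x close to x0 and s small, every point of Omega within s of x
   can move a length s along v without leaving Omega.  Compactness of the closure
   turns these local radii into a uniform one. *)

From HB Require Import structures.
From mathcomp Require Import all_boot all_order all_algebra.
From mathcomp Require Import all_classical all_reals all_analysis.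
From mathcomp Require Import lra.
Set Implicit Arguments. Unset Strict Implicit. Unset Printing Implicit Defensive.
Import Order.TTheory GRing.Theory Num.Theory.
Import numFieldNormedType.Exports.
Local Open Scope classical_set_scope.
Local Open Scope ring_scope.

Section LinearForm.
Context {R : realType} {d : nat}.
Implicit Types (a x y : 'rV[R]_d).

Lemma lformD a x y : lform a (x + y) = lform a x + lform a y.
Proof. by rewrite /lform -big_split; apply: eq_bigr => i _; rewrite mxE mulrDr. Qed.

Lemma lformZ a c x : lform a (c *: x) = c * lform a x.
Proof. by rewrite /lform mulr_sumr; apply: eq_bigr => i _; rewrite mxE mulrCA. Qed.

Lemma lform_continuous a : continuous (lform a).
Proof.
rewrite /lform; apply: continuous_big => [|i _]; first exact: add_continuous.
by move=> x; apply: continuousM; [exact: cst_continuous | exact: coord_continuous].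
Qed.

Lemma near_lform_gt a x c : c < lform a x -> \forall y \near x, c < lform a y.
Proof. exact: cvgr_gt (@lform_continuous a x) c. Qed.

Lemma mxnorm_le_enorm x : `|x| <= enorm x.
Proof.
rewrite [leLHS]/Num.norm /= mx_normrE; apply/bigmax_leP.
split=> [|[i k] _ /=]; first exact: sqrtr_ge0.
rewrite (ord1 i) /enorm -sqrtr_sqr ler_sqrt ?sumr_ge0 // => [|j _]; last exact: sqr_ge0.
by rewrite (bigD1 k) //= lerDl sumr_ge0 // => j _; exact: sqr_ge0.
Qed.

Lemma eball_sub_ball x r : eball x r `<=` ball x r.
Proof.
move=> y; rewrite /eball /= -ball_normE /ball_ /= distrC.
exact: le_lt_trans (mxnorm_le_enorm _).
Qed.

Lemma halfspace_stable_near a v x0 c : (lform a v < 0 -> c < lform a x0) ->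
  \forall x \near x0 & s \near 0^'+, forall y, eball x s y -> c < lform a y ->
    forall t, 0 <= t -> t <= s -> c < lform a (y + t *: v).
Proof.
move=> v_inward; have [L_ge0|L_lt0] := leP 0 (lform a v).
  apply: filterE => -[x s] y _ cy t t_ge0 _.
  by rewrite lformD lformZ (lt_le_trans cy) // lerDl mulr_ge0.
set L := lform a v in L_lt0 *; set k := lform a x0 - c.
have k_gt0 : 0 < k by rewrite subr_gt0 v_inward.
have /nbhs_ballP [r r_gt0 ball_sub] : \forall y \near x0, c + k / 2 < lform a y.
  by apply: near_lform_gt; move: k_gt0; rewrite /k; lra.
have bound_gt0 : 0 < k / (2 * - L) by rewrite divr_gt0 // mulr_gt0 // oppr_gt0.
exists (ball x0 (r / 2), [set s | s < r / 2 /\ s < k / (2 * - L)]).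
  have r2_gt0 : 0 < r / 2 by rewrite divr_gt0.
  split; first exact: nbhsx_ballx.
  exact: filterI (nbhs_right_lt r2_gt0) (nbhs_right_lt bound_gt0).
move=> [x s] /= [x_near [s_r s_k]] y /eball_sub_ball y_near _ t t_ge0 t_le_s.
have /ball_sub : ball x0 r y.
  by apply: ball_split x_near _; exact: le_ball (ltW s_r) _ y_near.
have sL : s * - L < k / 2.
  by move: s_k; rewrite ltr_pdivlMr ?mulr_gt0 ?oppr_gt0 //; nra.
have tL : s * L <= t * L by rewrite ler_wnM2r // ltW.
rewrite lformD lformZ -/L; move: sL; rewrite /k mulrN; lra.
Qed.

End LinearForm.

Section Polytope.
Context {R : realType} {d m : nat}.
Variables (a : 'I_m -> 'rV[R]_d) (b : 'I_m -> R).
Local Notation Omega := (polyOmega a b).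

Lemma closure_polyOmega_ge j : closure Omega `<=` [set x | b j <= lform (a j) x].
Proof.
rewrite closureE; apply: smallest_sub => [|y Oy]; last exact: ltW (Oy j).
apply: (@preimage_closed _ _ (lform (a j)) [set r | b j <= r]) => [y _|].
  exact: lform_continuous.
exact: closed_ge.
Qed.

Lemma open_polyOmega : open Omega.
Proof.
rewrite openE => x Ox.
exact: filter_forall _ (fun j => near_lform_gt (Ox j)).
Qed.

Lemma compact_closure_polyOmega :
  (exists M : R, forall x, Omega x -> enorm x <= M) -> compact (closure Omega).
Proof.
move=> [M OM]; apply: bounded_closed_compact; last exact: closed_closure.
have sub : closure Omega `<=` closed_ball_ Num.norm 0 M.
  rewrite closureE; apply: smallest_sub => [|x Ox]; first exact: closed_closed_ball_.
  by rewrite /closed_ball_ /= sub0r normrN (le_trans (mxnorm_le_enorm _)) ?OM.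
exists M; split=> [|N MN x /sub]; first exact: num_real.
by rewrite /closed_ball_ /= sub0r normrN => /le_trans; apply; exact: ltW.
Qed.

Lemma polyBoundary_nonempty : (0 < d)%N -> Omega !=set0 ->
  compact (closure Omega) -> polyBoundary a b !=set0.
Proof.
move=> d_gt0 [x0 Ox0] cOmega.
pose u : 'rV[R]_d := const_mx 1.
have [y /set_mem cy ymax] := compact_EVT_max (ex_intro _ x0 (subset_closure Ox0))
  cOmega (continuous_subspaceT (lform_continuous (a := u))).
exists y; split=> // Oy.
(* A maximiser of the linear form lform u on the closure cannot lie in open Omega. *)
move: open_polyOmega; rewrite openE => /(_ y Oy) /nbhs_ballP [r r_gt0 ball_sub].
have u_le1 : `|u| <= 1.
  rewrite [leLHS]/Num.norm /= mx_normrE; apply/bigmax_leP.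
  by split=> // ij _; rewrite mxE normr1.
have uu : lform u u = d%:R.
  by rewrite /lform (eq_bigr (fun=> 1)) ?sumr_const ?card_ord // => i _; rewrite mxE mulr1.
have /ymax : (y + (r / 2) *: u) \in closure Omega.
  apply/mem_set/subset_closure/ball_sub.
  rewrite -ball_normE /ball_ /= opprD addNKr normrN normrZ gtr0_norm ?divr_gt0 //.
  rewrite (le_lt_trans (ler_wpM2l _ u_le1)) ?divr_ge0 ?ltW // mulr1.
  by rewrite ltr_pdivrMr // ltr_pMr // ltr1n.
rewrite lformD lformZ uu gerDl pmulr_rle0 ?divr_gt0 //.
by rewrite leNgt ltr0n d_gt0.
Qed.

Definition feasible_dir (x v : 'rV[R]_d) :=
  forall j, lform (a j) v < 0 -> b j < lform (a j) x.

Lemma feasible_dir_stable_near x0 v : feasible_dir x0 v ->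
  \forall x \near x0 & s \near 0^'+, forall y, (eball x s `&` Omega) y ->
    forall t, 0 <= t -> t <= s -> Omega (y + t *: v).
Proof.
move=> v_feasible.
have := filter_forall _ (fun j => halfspace_stable_near (v_feasible j)).
move=> /(_ ltac:(exact: filter_prod_filter)).
apply: filterS => -[x s] /= stable y [y_near Oy] t t_ge0 t_le_s j.
exact: stable.
Qed.

Lemma ccount_lt_closure x y : (ccount a b x < y)%E -> closure Omega x.
Proof.
rewrite /ccount; case: ifPn => [/set_mem Ox _|_]; first exact: subset_closure.
by case: ifPn => [_|/negPn/set_mem //]; rewrite ltNge leey.
Qed.

Section IncomingDirections.
Variables (p : nat) (e : 'I_p -> 'rV[R]_d).
Hypothesis e_incoming : weakly_incoming a b e.

Lemma weakly_incoming_feasible_dir x0 : polyBoundary a b x0 ->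
  exists q th, (th = 1 \/ th = -1) /\ feasible_dir x0 (th *: e q).
Proof.
move=> x0_bd; have [eps [eps_gt0 [th [th_pm [q decr]]]]] := e_incoming x0_bd.
exists q, th; split=> // j L_lt0.
have := closure_polyOmega_ge j (ccount_lt_closure (decr eps eps_gt0 (lexx _))).
rewrite /= lformD mulrC -scalerA lformZ.
have : eps * lform (a j) (th *: e q) < 0 by rewrite pmulr_rlt0.
lra.
Qed.

Lemma feasible_dir_closure (q0 : 'I_p) x0 : closure Omega x0 ->
  exists q th, (th = 1 \/ th = -1) /\ feasible_dir x0 (th *: e q).
Proof.
move=> x0_cl; have [Ox0|Ox0] := pselect (Omega x0).
  by exists q0, 1; split=> [|j _]; [left | exact: Ox0].
exact: weakly_incoming_feasible_dir.
Qed.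

Definition incoming_at_scale s x0 := exists q th, (th = 1 \/ th = -1) /\
  forall y, (eball x0 s `&` Omega) y ->
    forall t, 0 <= t -> t <= s -> Omega (y + (t * th) *: e q).

Lemma incoming_at_scale_near (q0 : 'I_p) : compact (closure Omega) ->
  \forall s \near 0^'+, closure Omega `<=` incoming_at_scale s.
Proof.
move=> cOmega.
have cover := (near_covering_withinP _).2 ((compact_near_coveringP _).1 cOmega).
apply: (cover R 0^'+ incoming_at_scale) => x0 /(feasible_dir_closure q0).
move=> [q [th [th_pm v_feasible]]].
move: (feasible_dir_stable_near v_feasible); apply: filterS => -[x s] /= stable _.
by exists q, th; split=> // y y_near t t_ge0 t_le_s; rewrite -scalerA; exact: stable.
Qed.

End IncomingDirections.

End Polytope.

Theorem corollary1p4 (R : realType) (d m p : nat)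
  (a : 'I_m -> 'rV[R]_d) (b : 'I_m -> R) (e : 'I_p -> 'rV[R]_d) :
  (2 <= d)%N ->
  polyOmega a b !=set0 ->
  (exists M : R, forall x, polyOmega a b x -> enorm x <= M) ->
  weakly_incoming a b e ->
  exists r : R, 0 < r /\
  exists eps : R, 0 < eps /\ eps <= 1 /\
  forall x0, closure (polyOmega a b) x0 ->
    exists q : 'I_p, exists theta : R, (theta = 1 \/ theta = -1) /\
      forall x, (eball x0 r `&` polyOmega a b) x ->
        forall t : R, 0 <= t -> t <= eps ->
          polyOmega a b (x + (t * theta) *: e q).
Proof.
move=> d_ge2 Omega_ne Omega_bd e_incoming.
have cOmega := compact_closure_polyOmega Omega_bd.
have [x0 x0_bd] := polyBoundary_nonempty (ltnW d_ge2) Omega_ne cOmega.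
(* Only used to produce an index q0 : 'I_p, a valid direction at interior points. *)
have [q0 _] := weakly_incoming_feasible_dir e_incoming x0_bd.
have := incoming_at_scale_near e_incoming q0 cOmega.
move=> /(filterI (filterI (nbhs_right_gt 0) (nbhs_right_le (@ltr01 R)))) /filter_ex.
move=> [s [[s_gt0 s_le1] s_incoming]].
by exists s; split=> //; exists s.
Qed.
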